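(* Let $\lambda$ be a non-discrete Hausdorff linear group topology on $\mathbb{Z}$. Then there exists a metrizable locally quasi-convex Hausdorff group topology $\tau$ on $\mathbb{Z}$ which is strictly finer than $\lambda$ and satisfies $(\mathbb{Z},\tau)^\wedge=(\mathbb{Z},\lambda)^\wedge$. Consequently $\lambda$ is not the Mackey topology; in particular, for every prime $p$ the $p$-adic topology on $\mathbb{Z}$ (with neighborhood basis $\{p^n\mathbb{Z}\}_{n\in\mathbb{N}_0}$ at $0$) is not a Mackey topology.
   Context: $\mathbb{T}=\mathbb{R}/\mathbb{Z}$, $\mathbb{T}_+=[-\frac14,\frac14]+\mathbb{Z}$. For a topological abelian group $G$, $G^\wedge$ is the group of continuous homomorphisms $G\to\mathbb{T}$. A group topology is linear if it has a neighborhood basis at $0$ of subgroups. For $A\subseteq G$, $A^\triangleright=\{\chi\in G^\wedge:\chi(A)\subseteq\mathbb{T}_+\}$; for $B\subseteq G^\wedge$, $B^\triangleleft=\{x\in G:\chi(x)\in\mathbb{T}_+\ \forall\chi\in B\}$; $A$ is quasi-convex if $A=(A^\triangleright)^\triangleleft$; $G$ is locally quasi-convex if it has a neighborhood basis at $0$ of quasi-convex sets. Two locally quasi-convex group topologies on the same group are compatible if they have the same continuous characters. A locally quasi-convex group topology $\lambda$ on $G$ is the Mackey topology if it is the finest locally quasi-convex group topology on $G$ compatible with $\lambda$. *)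

From Stdlib Require Import ZArith Reals Znumtheory.
Open Scope R_scope.

Definition topZ := (Z -> Prop) -> Prop.

Definition is_topology (t : topZ) : Prop :=
  t (fun _ => True) /\
  (forall (I : Type) (F : I -> Z -> Prop), (forall i, t (F i)) ->
      t (fun x => exists i, F i x)) /\
  (forall U V, t U -> t V -> t (fun x => U x /\ V x)).

Definition is_group_topology (t : topZ) : Prop :=
  is_topology t /\
  forall x y W, t W -> W (x - y)%Z ->
    exists U V, t U /\ t V /\ U x /\ V y /\
      forall u v, U u -> V v -> W (u - v)%Z.

Definition nbhd (t : topZ) (U : Z -> Prop) (x : Z) : Prop :=
  exists V, t V /\ V x /\ forall y, V y -> U y.

Definition hausdorff (t : topZ) : Prop :=
  forall x y, x <> y -> exists U V, t U /\ t V /\ U x /\ V y /\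
    forall z, U z -> V z -> False.

Definition non_discrete (t : topZ) : Prop := ~ t (fun x => x = 0%Z).

Definition subgroupZ (H : Z -> Prop) : Prop :=
  H 0%Z /\ forall x y, H x -> H y -> H (x - y)%Z.

Definition linear_top (t : topZ) : Prop :=
  forall U, nbhd t U 0%Z ->
    exists H, subgroupZ H /\ nbhd t H 0%Z /\ forall x, H x -> U x.

Definition metrizable (t : topZ) : Prop :=
  exists d : Z -> Z -> R,
    (forall x y, 0 <= d x y) /\ (forall x y, d x y = 0 <-> x = y) /\
    (forall x y, d x y = d y x) /\ (forall x y z, d x z <= d x y + d y z) /\
    (forall U, t U <-> forall x, U x -> exists eps, eps > 0 /\
        forall y, d x y < eps -> U y).

(* T = R/Z : a map Z -> T is represented by a map Z -> R, modulo Z-valued maps *)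
Definition hom_to_T (f : Z -> R) : Prop :=
  forall m n, exists k : Z, f (m + n)%Z - f m - f n = IZR k.

Definition cont_to_T (t : topZ) (f : Z -> R) : Prop :=
  forall x eps, eps > 0 -> exists U, t U /\ U x /\
    forall y, U y -> exists k : Z, Rabs (f y - f x - IZR k) < eps.

Definition character (t : topZ) (f : Z -> R) : Prop :=
  hom_to_T f /\ cont_to_T t f.

Definition in_Tplus (a : R) : Prop := exists k : Z, Rabs (a - IZR k) <= / 4.

Definition polar (t : topZ) (A : Z -> Prop) (f : Z -> R) : Prop :=
  character t f /\ forall a, A a -> in_Tplus (f a).

Definition prepolar (B : (Z -> R) -> Prop) (x : Z) : Prop :=
  forall f, B f -> in_Tplus (f x).

Definition quasi_convex (t : topZ) (A : Z -> Prop) : Prop :=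
  forall x, A x <-> prepolar (polar t A) x.

Definition loc_quasi_convex (t : topZ) : Prop :=
  forall U, nbhd t U 0%Z ->
    exists Q, quasi_convex t Q /\ nbhd t Q 0%Z /\ forall x, Q x -> U x.

Definition lqc_group_topology (t : topZ) : Prop :=
  is_group_topology t /\ loc_quasi_convex t.

Definition same_dual (t1 t2 : topZ) : Prop :=
  forall f, character t1 f <-> character t2 f.

Definition compatible (t1 t2 : topZ) : Prop :=
  lqc_group_topology t1 /\ lqc_group_topology t2 /\ same_dual t1 t2.

Definition finer (t1 t2 : topZ) : Prop := forall U, t2 U -> t1 U.

Definition strictly_finer (t1 t2 : topZ) : Prop :=
  finer t1 t2 /\ exists U, t1 U /\ ~ t2 U.

Definition mackey (l : topZ) : Prop :=
  lqc_group_topology l /\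
  forall t, compatible t l -> finer l t.

Definition padic_top (p : Z) : topZ :=
  fun U => forall x, U x -> exists n : nat,
    forall k : Z, U (x + k * p ^ Z.of_nat n)%Z.

(* The open subgroups of l are the n Z for the "open moduli" n, and they can be
   arranged in a divisor chain 1 = N_0 | N_1 | ..., with quotients r_i > i + 2, that is
   cofinal among the neighbourhoods of 0.  The seminorm nu(z) = sup_j |z / N_j|, where
   |x| is the distance from x to Z, defines the new topology t.  It is locally
   quasi-convex, being the topology of uniform convergence on the characters z / N_j;
   it is finer than l because nu(z) < 1/N_i forces N_i | z, and strictly finer since
   every N_i Z meets the complement of the ball of radius 1/4.  The key lemma says that a
   t-continuous character z |-> z th is trivial on some N_i Z (otherwise one assembles
   z = sum c_i N_i of small norm with |z th| >= 1/4), hence it is l-continuous. *)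
From Stdlib Require Import ZArith Reals Znumtheory Lia Lra.
From Stdlib Require Import Classical ClassicalEpsilon FunctionalExtensionality PropExtensionality.

Open Scope R_scope.

Definition is_int (x : R) : Prop := exists k : Z, x = IZR k.

Lemma is_int_IZR k : is_int (IZR k).
Proof. now exists k. Qed.

Lemma is_int_add x y : is_int x -> is_int y -> is_int (x + y).
Proof. intros [a ->] [b ->]. exists (a + b)%Z. now rewrite plus_IZR. Qed.

Lemma is_int_sub x y : is_int x -> is_int y -> is_int (x - y).
Proof. intros [a ->] [b ->]. exists (a - b)%Z. now rewrite minus_IZR. Qed.

Lemma is_int_mul x y : is_int x -> is_int y -> is_int (x * y).
Proof. intros [a ->] [b ->]. exists (a * b)%Z. now rewrite mult_IZR. Qed.

Definition dist_int (x : R) : R :=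
  Rmin (x - IZR (Int_part x)) (IZR (Int_part x) + 1 - x).

Lemma Int_part_bounds x : IZR (Int_part x) <= x < IZR (Int_part x) + 1.
Proof. destruct (base_Int_part x). lra. Qed.

Lemma dist_int_le x k : dist_int x <= Rabs (x - IZR k).
Proof.
  unfold dist_int. destruct (Int_part_bounds x) as [H1 H2].
  destruct (Z_le_gt_dec k (Int_part x)) as [Hk|Hk].
  - apply IZR_le in Hk. eapply Rle_trans; [apply Rmin_l|].
    rewrite Rabs_right; lra.
  - assert (IZR (Int_part x) + 1 <= IZR k) by (rewrite <- plus_IZR; apply IZR_le; lia).
    eapply Rle_trans; [apply Rmin_r|]. rewrite Rabs_left1; lra.
Qed.

Lemma dist_int_attained x : exists k, Rabs (x - IZR k) = dist_int x.
Proof.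
  unfold dist_int. destruct (Int_part_bounds x). unfold Rmin. destruct Rle_dec.
  - exists (Int_part x). rewrite Rabs_right; lra.
  - exists (Int_part x + 1)%Z. rewrite plus_IZR, Rabs_left1; lra.
Qed.

Lemma dist_int_ltP x b : dist_int x < b <-> exists k, Rabs (x - IZR k) < b.
Proof.
  split.
  - intro H. destruct (dist_int_attained x) as [k Hk]. exists k. lra.
  - intros [k Hk]. pose proof (dist_int_le x k). lra.
Qed.

Lemma in_Tplus_iff x : in_Tplus x <-> dist_int x <= / 4.
Proof.
  unfold in_Tplus. split.
  - intros [k Hk]. pose proof (dist_int_le x k). lra.
  - intro H. destruct (dist_int_attained x) as [k Hk]. exists k. lra.
Qed.

Lemma dist_int_ge0 x : 0 <= dist_int x.
Proof. destruct (dist_int_attained x) as [k <-]. apply Rabs_pos. Qed.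

Lemma dist_int_le_half x : dist_int x <= / 2.
Proof. unfold dist_int. destruct (Int_part_bounds x). unfold Rmin; destruct Rle_dec; lra. Qed.

Lemma dist_int_shift x z : is_int z -> dist_int (x + z) = dist_int x.
Proof.
  intros [kz ->]. apply Rle_antisym.
  - destruct (dist_int_attained x) as [k <-].
    replace (x - IZR k) with (x + IZR kz - IZR (k + kz)) by (rewrite plus_IZR; ring).
    apply dist_int_le.
  - destruct (dist_int_attained (x + IZR kz)) as [k <-].
    replace (x + IZR kz - IZR k) with (x - IZR (k - kz)) by (rewrite minus_IZR; ring).
    apply dist_int_le.
Qed.

Lemma dist_int_opp x : dist_int (- x) = dist_int x.
Proof.
  assert (H : forall y, dist_int (- y) <= dist_int y).
  { intro y. destruct (dist_int_attained y) as [k <-].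
    replace (Rabs (y - IZR k)) with (Rabs (- y - IZR (- k)))
      by (rewrite opp_IZR, <- Rabs_Ropp; f_equal; ring).
    apply dist_int_le. }
  apply Rle_antisym; [apply H|]. rewrite <- (Ropp_involutive x) at 1. apply H.
Qed.

Lemma dist_int_add x y : dist_int (x + y) <= dist_int x + dist_int y.
Proof.
  destruct (dist_int_attained x) as [k <-]. destruct (dist_int_attained y) as [l <-].
  eapply Rle_trans; [apply (dist_int_le _ (k + l))|].
  rewrite plus_IZR.
  replace (x + y - (IZR k + IZR l)) with ((x - IZR k) + (y - IZR l)) by ring.
  apply Rabs_triang.
Qed.

Lemma dist_int_abs x : dist_int x <= Rabs x.
Proof. pose proof (dist_int_le x 0). now rewrite Rminus_0_r in H. Qed.

Lemma dist_int_small x : Rabs x <= / 2 -> dist_int x = Rabs x.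
Proof.
  intro H. apply Rle_antisym; [apply dist_int_abs|].
  destruct (dist_int_attained x) as [k <-].
  destruct (Z.eq_dec k 0) as [->|Hk0].
  - rewrite Rminus_0_r. lra.
  - assert (1 <= Rabs (IZR k)) by (rewrite Rabs_Zabs; apply IZR_le; lia).
    pose proof (Rabs_triang_inv (IZR k) x).
    rewrite Rabs_minus_sym. lra.
Qed.

Lemma dist_int_IZR k : dist_int (IZR k) = 0.
Proof.
  apply Rle_antisym; [|apply dist_int_ge0].
  pose proof (dist_int_le (IZR k) k). now rewrite Rminus_diag, Rabs_R0 in H.
Qed.

Lemma dist_int_eq0 x : dist_int x = 0 -> is_int x.
Proof.
  intro H. destruct (dist_int_attained x) as [k Hk]. exists k. rewrite H in Hk.
  destruct (Req_dec x (IZR k)) as [|Hne]; [assumption|].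
  exfalso. apply (Rabs_no_R0 (x - IZR k)); [lra|assumption].
Qed.

Lemma dist_int_double x : dist_int x <= / 4 -> dist_int (2 * x) = 2 * dist_int x.
Proof.
  intro H. destruct (dist_int_attained x) as [k Hk].
  replace (2 * x) with (2 * (x - IZR k) + IZR (2 * k)) by (rewrite mult_IZR; simpl; ring).
  rewrite dist_int_shift by apply is_int_IZR.
  rewrite dist_int_small; rewrite Rabs_mult, Rabs_right by lra; lra.
Qed.

Lemma dist_int_pow2 k x : dist_int (2 ^ k * x) <= 2 ^ k * dist_int x.
Proof.
  induction k as [|k IH]; simpl; [rewrite !Rmult_1_l; lra|].
  replace (2 * 2 ^ k * x) with (2 ^ k * x + 2 ^ k * x) by ring.
  pose proof (dist_int_add (2 ^ k * x) (2 ^ k * x)). lra.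
Qed.

Lemma pow2_pos k : 0 < 2 ^ k.
Proof. apply pow_lt; lra. Qed.

Lemma dist_int_doubling K x :
  (forall k, (k <= K)%nat -> dist_int (2 ^ k * x) <= / 4) -> dist_int x <= / 4 * / 2 ^ K.
Proof.
  revert x. induction K as [|K IH]; intros x H.
  - specialize (H 0%nat (le_n _)). simpl in *. rewrite Rmult_1_l in H. lra.
  - assert (H0 : dist_int x <= / 4)
      by (specialize (H 0%nat ltac:(lia)); simpl in H; rewrite Rmult_1_l in H; lra).
    assert (H1 : dist_int (2 * x) <= / 4 * / 2 ^ K).
    { apply IH. intros k Hk. replace (2 ^ k * (2 * x)) with (2 ^ S k * x) by (simpl; ring).
      apply H. lia. }
    rewrite dist_int_double in H1 by assumption.
    pose proof (pow2_pos K). simpl. rewrite Rinv_mult. lra.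
Qed.

Lemma nat_large x : exists n, x < INR n.
Proof.
  destruct (archimed x) as [H1 _]. destruct (Z_le_gt_dec 0 (up x)).
  - exists (Z.to_nat (up x)). rewrite INR_IZR_INZ, Z2Nat.id by lia. lra.
  - exists 0%nat. simpl. assert (Hu : (up x < 0)%Z) by lia. apply IZR_lt in Hu. lra.
Qed.

Lemma pow2_large x : exists K, x < 2 ^ K.
Proof.
  destruct (nat_large x) as [n Hn]. exists n.
  assert (INR n <= 2 ^ n).
  { clear. induction n as [|n IH]; [simpl; lra|]. rewrite S_INR. simpl.
    assert (1 <= 2 ^ n) by (clear; induction n; simpl; lra). lra. }
  lra.
Qed.

Lemma pow2_small e : e > 0 -> exists K, / 4 * / 2 ^ K < e.
Proof.
  intro He. destruct (pow2_large (/ e)) as [K HK]. exists K.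
  pose proof (pow2_pos K).
  assert (/ 2 ^ K < e).
  { rewrite <- (Rinv_inv e). apply Rinv_lt_contravar; [|assumption].
    apply Rmult_lt_0_compat; [apply Rinv_0_lt_compat|]; lra. }
  assert (0 < / 2 ^ K) by (apply Rinv_0_lt_compat; lra). lra.
Qed.

Lemma hom_linear f : hom_to_T f -> forall m, is_int (f m - IZR m * f 1%Z).
Proof.
  intros Hf. apply Z.peano_ind.
  - destruct (Hf 0%Z 0%Z) as [k Hk]. exists (- k)%Z. rewrite opp_IZR, <- Hk. simpl. ring.
  - intros x [a Ha]. destruct (Hf x 1%Z) as [k Hk]. exists (a + k)%Z.
    rewrite plus_IZR, <- Ha, <- Hk, <- Z.add_1_r, plus_IZR. simpl. ring.
  - intros x [a Ha]. destruct (Hf (Z.pred x) 1%Z) as [k Hk]. exists (a - k)%Z.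
    rewrite minus_IZR, <- Ha, <- Hk. replace (Z.pred x + 1)%Z with x by lia.
    rewrite <- Z.sub_1_r, minus_IZR. simpl. ring.
Qed.

Lemma hom_diff f : hom_to_T f -> forall x y, is_int (f y - f x - IZR (y - x) * f 1%Z).
Proof.
  intros Hf x y. pose proof (is_int_sub _ _ (hom_linear f Hf y) (hom_linear f Hf x)) as H.
  rewrite minus_IZR. replace (f y - f x - (IZR y - IZR x) * f 1%Z)
    with (f y - IZR y * f 1%Z - (f x - IZR x * f 1%Z)) by ring. exact H.
Qed.

Section SeminormTopology.

Variable nu : Z -> R.
Hypothesis nu_0 : nu 0%Z = 0.
Hypothesis nu_opp : forall z, nu (- z)%Z = nu z.
Hypothesis nu_add : forall a b, nu (a + b)%Z <= nu a + nu b.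

Definition seminorm_top : topZ := fun U =>
  forall x, U x -> exists eps, eps > 0 /\ forall y, nu (x - y)%Z < eps -> U y.

Lemma nu_ge0 z : 0 <= nu z.
Proof. pose proof (nu_add z (- z)). rewrite Z.add_opp_diag_r, nu_opp, nu_0 in H. lra. Qed.

Lemma nu_sym x y : nu (x - y)%Z = nu (y - x)%Z.
Proof. rewrite <- nu_opp. f_equal. lia. Qed.

Lemma nu_tri x y z : nu (x - z)%Z <= nu (x - y)%Z + nu (y - z)%Z.
Proof. replace (x - z)%Z with ((x - y) + (y - z))%Z by lia. apply nu_add. Qed.

Lemma ball_open c r : seminorm_top (fun y => nu (c - y)%Z < r).
Proof.
  intros x Hx. exists (r - nu (c - x)%Z). split; [lra|].
  intros y Hy. pose proof (nu_tri c x y). lra.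
Qed.

Lemma ball_center c r : r > 0 -> nu (c - c)%Z < r.
Proof. rewrite Z.sub_diag, nu_0. lra. Qed.

Lemma seminorm_is_topology : is_topology seminorm_top.
Proof.
  split; [|split].
  - intros x _. exists 1. split; [lra|auto].
  - intros I F HF x [i Hi]. destruct (HF i x Hi) as [e [He H]].
    exists e. split; [assumption|]. intros y Hy. exists i. auto.
  - intros U V HU HV x [Ux Vx].
    destruct (HU x Ux) as [e1 [He1 H1]]. destruct (HV x Vx) as [e2 [He2 H2]].
    exists (Rmin e1 e2). split; [now apply Rmin_glb_lt|].
    intros y Hy. split; [apply H1|apply H2];
      [apply Rlt_le_trans with (1 := Hy); apply Rmin_l|
       apply Rlt_le_trans with (1 := Hy); apply Rmin_r].
Qed.

Lemma seminorm_group_topology : is_group_topology seminorm_top.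
Proof.
  split; [apply seminorm_is_topology|].
  intros x y W HW Wxy. destruct (HW _ Wxy) as [e [He H]].
  exists (fun u => nu (x - u)%Z < e / 2), (fun v => nu (y - v)%Z < e / 2).
  do 2 (split; [apply ball_open|]). do 2 (split; [apply ball_center; lra|]).
  intros u v Hu Hv. apply H.
  replace (x - y - (u - v))%Z with ((x - u) + - (y - v))%Z by lia.
  pose proof (nu_add (x - u) (- (y - v))). rewrite nu_opp in H0. lra.
Qed.

Section Definite.

Hypothesis nu_pos : forall z, z <> 0%Z -> 0 < nu z.

Lemma seminorm_metrizable : metrizable seminorm_top.
Proof.
  exists (fun x y => nu (x - y)%Z). split; [|split; [|split; [|split]]].
  - intros. apply nu_ge0.
  - intros x y. split.
    + intro H. destruct (Z.eq_dec x y) as [|Hxy]; [assumption|].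
      pose proof (nu_pos (x - y) ltac:(lia)). lra.
    + intros ->. now rewrite Z.sub_diag.
  - apply nu_sym.
  - apply nu_tri.
  - intro U. reflexivity.
Qed.

Lemma seminorm_hausdorff : hausdorff seminorm_top.
Proof.
  intros x y Hxy. pose proof (nu_pos (x - y) ltac:(lia)) as Hp.
  exists (fun z => nu (x - z)%Z < nu (x - y)%Z / 2), (fun z => nu (y - z)%Z < nu (x - y)%Z / 2).
  do 2 (split; [apply ball_open|]). do 2 (split; [apply ball_center; lra|]).
  intros z H1 H2. pose proof (nu_tri x z y). rewrite (nu_sym z y) in H. lra.
Qed.

End Definite.

End SeminormTopology.

Section SupNorm.

(* For reals alpha_j, sup_j |z alpha_j| (distance to Z) is the seminorm of uniform
   convergence on the characters z |-> z alpha_j; its topology is locally quasi-convex. *)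
Variable alpha : nat -> R.

Definition sup_terms (z : Z) (x : R) : Prop := exists j, x = dist_int (IZR z * alpha j).

Lemma sup_terms_bound z : bound (sup_terms z).
Proof. exists (/ 2). intros x [j ->]. apply dist_int_le_half. Qed.

Lemma sup_terms_inhabited z : exists x, sup_terms z x.
Proof. now exists (dist_int (IZR z * alpha 0)), 0%nat. Qed.

Definition sup_dist (z : Z) : R :=
  proj1_sig (completeness _ (sup_terms_bound z) (sup_terms_inhabited z)).

Lemma sup_dist_ge z j : dist_int (IZR z * alpha j) <= sup_dist z.
Proof.
  unfold sup_dist. destruct completeness as [m [Hub Hlub]]. simpl. apply Hub. now exists j.
Qed.

Lemma sup_dist_le z b : (forall j, dist_int (IZR z * alpha j) <= b) -> sup_dist z <= b.
Proof.
  intro H. unfold sup_dist. destruct completeness as [m [Hub Hlub]]. simpl.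
  apply Hlub. intros x [j ->]. apply H.
Qed.

Lemma sup_dist_0 : sup_dist 0 = 0.
Proof.
  apply Rle_antisym.
  - apply sup_dist_le. intro j. replace (IZR 0 * alpha j) with (IZR 0) by (simpl; ring).
    rewrite dist_int_IZR. lra.
  - eapply Rle_trans; [apply dist_int_ge0|apply (sup_dist_ge 0 0)].
Qed.

Lemma sup_dist_opp z : sup_dist (- z) = sup_dist z.
Proof.
  assert (H : forall y, sup_dist (- y) <= sup_dist y).
  { intro y. apply sup_dist_le. intro j.
    rewrite opp_IZR, Ropp_mult_distr_l_reverse, dist_int_opp. apply sup_dist_ge. }
  apply Rle_antisym; [apply H|]. rewrite <- (Z.opp_involutive z) at 1. apply H.
Qed.

Lemma sup_dist_add a b : sup_dist (a + b) <= sup_dist a + sup_dist b.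
Proof.
  apply sup_dist_le. intro j. rewrite plus_IZR, Rmult_plus_distr_r.
  pose proof (dist_int_add (IZR a * alpha j) (IZR b * alpha j)).
  pose proof (sup_dist_ge a j). pose proof (sup_dist_ge b j). lra.
Qed.

Definition sup_top : topZ := seminorm_top sup_dist.

Lemma sup_ball_open c r : sup_top (fun y => sup_dist (c - y) < r).
Proof. apply ball_open, sup_dist_add. Qed.

Lemma sup_ball_center c r : r > 0 -> sup_dist (c - c) < r.
Proof. apply ball_center, sup_dist_0. Qed.

(* The test characters m |-> 2^k m alpha_j, whose polars cut out the quasi-convex
   neighbourhoods of 0. *)
Definition test_char (k j : nat) : Z -> R := fun m => 2 ^ k * (IZR m * alpha j).

Lemma test_char_bound k j m : dist_int (test_char k j m) <= 2 ^ k * sup_dist m.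
Proof.
  eapply Rle_trans; [apply dist_int_pow2|].
  apply Rmult_le_compat_l; [left; apply pow2_pos|apply sup_dist_ge].
Qed.

Lemma test_char_character k j : character sup_top (test_char k j).
Proof.
  split.
  - intros m n. exists 0%Z. unfold test_char. rewrite plus_IZR. ring.
  - intros x eps Heps. pose proof (pow2_pos k).
    exists (fun y => sup_dist (x - y) < eps / 2 ^ k).
    split; [apply sup_ball_open|].
    split; [apply sup_ball_center, Rdiv_lt_0_compat; lra|].
    intros y Hy. apply dist_int_ltP.
    replace (test_char k j y - test_char k j x) with (test_char k j (y - x))
      by (unfold test_char; rewrite minus_IZR; ring).
    eapply Rle_lt_trans; [apply test_char_bound|].
    rewrite <- sup_dist_opp, Z.opp_sub_distr, Z.add_opp_l.
    apply (Rmult_lt_compat_l (2 ^ k)) in Hy; [|assumption].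
    replace (2 ^ k * (eps / 2 ^ k)) with eps in Hy by (field; lra). exact Hy.
Qed.

Lemma sup_top_lqc : loc_quasi_convex sup_top.
Proof.
  intros U [V [HV [V0 VU]]]. destruct (HV 0%Z V0) as [eps [Heps Hball]].
  destruct (pow2_small eps Heps) as [K HK]. pose proof (pow2_pos K).
  exists (fun m => forall j k, (k <= K)%nat -> dist_int (test_char k j m) <= / 4).
  split; [|split].
  - intro x. split.
    + intros Qx f [_ Hf]. now apply Hf.
    + intros Hp j k Hk. apply in_Tplus_iff, Hp. split; [apply test_char_character|].
      intros a Qa. apply in_Tplus_iff. now apply Qa.
  - exists (fun m => sup_dist (0 - m) < / 4 * / 2 ^ K).
    split; [apply sup_ball_open|].
    split; [apply sup_ball_center, Rmult_lt_0_compat; [lra|now apply Rinv_0_lt_compat]|].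
    intros m Hm j k Hk. rewrite Z.sub_0_l, sup_dist_opp in Hm.
    eapply Rle_trans; [apply test_char_bound|].
    assert (2 ^ k <= 2 ^ K) by (apply Rle_pow; [lra|assumption]).
    apply Rle_trans with (2 ^ K * sup_dist m).
    + apply Rmult_le_compat_r; [|assumption].
      eapply Rle_trans; [apply dist_int_ge0|apply (sup_dist_ge m 0)].
    + apply (Rmult_lt_compat_l (2 ^ K)) in Hm; [|assumption].
      replace (2 ^ K * (/ 4 * / 2 ^ K)) with (/ 4) in Hm by (field; lra). lra.
  - intros m Qm. apply VU, Hball. rewrite Z.sub_0_l, sup_dist_opp.
    apply Rle_lt_trans with (/ 4 * / 2 ^ K); [|assumption].
    apply sup_dist_le. intro j. apply dist_int_doubling. intros k Hk. now apply Qm.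
Qed.

End SupNorm.

Definition divisor_chain (N : nat -> Z) : Prop :=
  (forall i, (0 < N i)%Z) /\
  (forall i, exists r, N (S i) = (r * N i)%Z /\ (Z.of_nat i + 2 < r)%Z).

Section Chain.

Variable N : nat -> Z.
Hypothesis HN : divisor_chain N.

Lemma chain_pos i : 0 < IZR (N i).
Proof. apply IZR_lt, HN. Qed.

Lemma chain_divides j i : (j <= i)%nat -> (N j | N i)%Z.
Proof.
  induction 1 as [|i _ IH]; [apply Z.divide_refl|].
  destruct (proj2 HN i) as [r [-> _]]. now apply Z.divide_mul_r.
Qed.

Lemma chain_ratio i : (INR i + 2) * IZR (N i) < IZR (N (S i)).
Proof.
  destruct (proj2 HN i) as [r [-> Hr]]. pose proof (chain_pos i).
  apply IZR_lt in Hr. rewrite plus_IZR, <- INR_IZR_INZ in Hr. rewrite mult_IZR. nra.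
Qed.

Lemma chain_double i : 2 * IZR (N i) <= IZR (N (S i)).
Proof. pose proof (chain_ratio i). pose proof (pos_INR i). pose proof (chain_pos i). nra. Qed.

Lemma chain_mono j i : (j <= i)%nat -> IZR (N j) <= IZR (N i).
Proof.
  induction 1 as [|i _ IH]; [lra|]. pose proof (chain_double i). pose proof (chain_pos i). lra.
Qed.

Lemma chain_unbounded i : (Z.of_nat i < N i)%Z.
Proof.
  induction i as [|i IH]; [apply HN|].
  pose proof (chain_double i) as H. rewrite <- mult_IZR in H. apply le_IZR in H. lia.
Qed.

Lemma chain_quotient_int j i a : (j <= i)%nat -> is_int (IZR (a * N i) * / IZR (N j)).
Proof.
  intro Hji. destruct (chain_divides j i Hji) as [q Hq]. exists (a * q)%Z.
  pose proof (chain_pos j). rewrite Hq, !mult_IZR. field. lra.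
Qed.

Lemma dist_int_quotient m j : dist_int (IZR m * / IZR (N j)) <= Rabs (IZR m) / IZR (N j).
Proof.
  pose proof (chain_pos j). eapply Rle_trans; [apply dist_int_abs|].
  rewrite Rabs_mult, Rabs_inv, (Rabs_right (IZR (N j))) by lra. lra.
Qed.

Definition chain_norm : Z -> R := sup_dist (fun j => / IZR (N j)).

Lemma chain_norm_ge z j : dist_int (IZR z * / IZR (N j)) <= chain_norm z.
Proof. apply (sup_dist_ge (fun j => / IZR (N j))). Qed.

(* Small chain norm forces divisibility: the chain topology is finer than the N_i Z one. *)
Lemma chain_norm_divides z i : chain_norm z < / IZR (N i) -> (N i | z)%Z.
Proof.
  intro H. pose proof (chain_norm_ge z i). pose proof (chain_pos i).
  destruct (proj1 (dist_int_ltP _ _) (Rle_lt_trans _ _ _ H0 H)) as [k Hk]. exists k.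
  assert (Rabs (IZR (z - k * N i)) < 1).
  { rewrite minus_IZR, mult_IZR.
    replace (IZR z - IZR k * IZR (N i)) with (IZR (N i) * (IZR z * / IZR (N i) - IZR k))
      by (field; lra).
    rewrite Rabs_mult, Rabs_right by lra.
    apply (Rmult_lt_compat_l (IZR (N i))) in Hk; [|assumption].
    rewrite Rinv_r in Hk; lra. }
  rewrite Rabs_Zabs in H2. apply lt_IZR in H2. lia.
Qed.

(* nu(z) = 0 would make z divisible by every N_i, which are unbounded. *)
Lemma chain_norm_pos z : z <> 0%Z -> 0 < chain_norm z.
Proof.
  intro Hz. set (i := Z.to_nat (Z.abs z)).
  destruct (Rlt_le_dec 0 (chain_norm z)) as [|Hle]; [assumption|]. exfalso.
  assert (Hdiv : (N i | z)%Z).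
  { apply chain_norm_divides. pose proof (Rinv_0_lt_compat _ (chain_pos i)). lra. }
  pose proof (chain_unbounded i) as Hbig. unfold i at 1 in Hbig.
  rewrite Z2Nat.id in Hbig by lia.
  destruct Hdiv as [q Hq]. pose proof (proj1 HN i). clearbody i. subst z.
  assert (q <> 0%Z) by (intro; subst; lia). nia.
Qed.

(* Each N_i Z leaves the chain-norm ball of radius 1/4: a N_i with a = r_i/2 has
   norm >= |a / r_i| >= 1/3. *)
Lemma chain_multiple_far i : exists a, / 4 <= chain_norm (a * N i).
Proof.
  destruct (proj2 HN i) as [r [Er Hr]]. exists (r / 2)%Z.
  assert (Ha : (2 * (r / 2) <= r <= 2 * (r / 2) + 1)%Z) by (Z.div_mod_to_equations; lia).
  set (a := (r / 2)%Z) in *.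
  assert (Pa : 1 <= IZR a) by (apply IZR_le; lia).
  assert (Ra : 2 * IZR a <= IZR r <= 2 * IZR a + 1).
  { destruct Ha as [Ha1 Ha2]. apply IZR_le in Ha1. apply IZR_le in Ha2.
    rewrite mult_IZR in Ha1. rewrite plus_IZR, mult_IZR in Ha2. simpl in *. lra. }
  pose proof (chain_pos i). pose proof (chain_norm_ge (a * N i) (S i)) as Hge.
  replace (IZR (a * N i) * / IZR (N (S i))) with (IZR a / IZR r) in Hge
    by (rewrite Er, !mult_IZR; field; lra).
  assert (Hq : / 3 <= IZR a / IZR r <= / 2).
  { split; apply (Rmult_le_reg_r (IZR r)); try lra; field_simplify; lra. }
  rewrite dist_int_small, Rabs_right in Hge by (rewrite ?Rabs_right; lra). lra.
Qed.

Lemma chain_norm_multiple a i :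
  chain_norm (a * N i) <= Rabs (IZR a) * IZR (N i) / IZR (N (S i)).
Proof.
  pose proof (chain_pos i). pose proof (chain_pos (S i)).
  apply sup_dist_le. intro j. destruct (le_lt_dec j i) as [Hji|Hij].
  - destruct (chain_quotient_int j i a Hji) as [k ->]. rewrite dist_int_IZR.
    apply Rmult_le_pos; [apply Rmult_le_pos; [apply Rabs_pos|lra]|].
    left. now apply Rinv_0_lt_compat.
  - eapply Rle_trans; [apply dist_int_quotient|].
    rewrite mult_IZR, Rabs_mult, (Rabs_right (IZR (N i))) by lra.
    pose proof (chain_mono (S i) j Hij). pose proof (chain_pos j).
    unfold Rdiv. apply Rmult_le_compat_l; [apply Rmult_le_pos; [apply Rabs_pos|lra]|].
    apply Rinv_le_contravar; lra.
Qed.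

Section DualKey.

(* A character m |-> m th whose values are < 1/4 on the chain-norm ball of radius
   delta; assuming it is nontrivial on every N_i Z we build an m in that ball with
   |m th| >= 1/4, where s is the step size of the construction. *)
Variable th delta s : R.
Hypothesis cont_th : forall m, chain_norm m < delta -> dist_int (IZR m * th) < / 4.
Hypothesis nontrivial : forall i, ~ is_int (IZR (N i) * th).
Hypothesis s_pos : 0 < s.
Hypothesis s_le : s <= / 8.
Hypothesis s_delta : 4 * s < delta.

(* Since chain_norm (2^k N_i) <= 2^k/(i+2), continuity makes |N_i th| small for large i. *)
Lemma eventually_small :
  exists i0, forall i, (i0 <= i)%nat -> dist_int (IZR (N i) * th) <= s / 2.
Proof.
  destruct (pow2_small (s / 2) ltac:(lra)) as [K HK]. pose proof (pow2_pos K).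
  destruct (nat_large (2 ^ K / delta)) as [i0 Hi0]. exists i0. intros i Hi.
  apply Rle_trans with (/ 4 * / 2 ^ K); [|lra].
  apply dist_int_doubling. intros k Hk. apply Rlt_le. rewrite <- Rmult_assoc.
  replace (2 ^ k * IZR (N i)) with (IZR (2 ^ Z.of_nat k * N i))
    by (now rewrite mult_IZR, <- pow_IZR).
  apply cont_th. eapply Rle_lt_trans; [apply chain_norm_multiple|].
  pose proof (chain_pos i). pose proof (chain_pos (S i)). pose proof (chain_ratio i).
  apply le_INR in Hi.
  assert (Hk2 : 2 ^ k <= 2 ^ K) by (apply Rle_pow; [lra|assumption]).
  rewrite <- pow_IZR, Rabs_right by (left; apply pow2_pos).
  assert (HKd : 2 ^ K < delta * (INR i + 2)).
  { apply (Rmult_lt_compat_r delta) in Hi0; [|lra].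
    replace (2 ^ K / delta * delta) with (2 ^ K) in Hi0 by (field; lra).
    assert (INR i0 * delta <= INR i * delta) by (apply Rmult_le_compat_r; lra). lra. }
  apply (Rmult_lt_reg_r (IZR (N (S i)))); [lra|].
  unfold Rdiv. rewrite Rmult_assoc, Rinv_l, Rmult_1_r by lra. nra.
Qed.

Lemma dist_growth i :
  2 * dist_int (IZR (N i) * th) * IZR (N (S i)) < IZR (N i) ->
  2 * dist_int (IZR (N i) * th) <= dist_int (IZR (N (S i)) * th).
Proof.
  intro H. destruct (proj2 HN i) as [r [Er Hr]]. pose proof (chain_pos i).
  assert (Pr : 3 <= IZR r) by (apply IZR_le; lia).
  destruct (dist_int_attained (IZR (N i) * th)) as [k Hk].
  rewrite Er, mult_IZR in *.
  replace (IZR r * IZR (N i) * th) with (IZR r * (IZR (N i) * th - IZR k) + IZR (r * k))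
    by (rewrite mult_IZR; ring).
  rewrite dist_int_shift by apply is_int_IZR.
  assert (Hsm : IZR r * dist_int (IZR (N i) * th) < / 2) by nra.
  pose proof (dist_int_ge0 (IZR (N i) * th)).
  rewrite (dist_int_small (IZR r * _)); rewrite Rabs_mult, Hk, (Rabs_right (IZR r)); nra.
Qed.

Lemma usable_index L : exists i, (L <= i)%nat /\ dist_int (IZR (N i) * th) <= s / 2 /\
  IZR (N i) <= 2 * dist_int (IZR (N i) * th) * IZR (N (S i)).
Proof.
  destruct eventually_small as [i0 Hsmall].
  apply NNPP. intro Hn. set (L' := max L i0).
  assert (Hg : forall i, (L' <= i)%nat ->
            2 * dist_int (IZR (N i) * th) <= dist_int (IZR (N (S i)) * th)).
  { intros i Hi. apply dist_growth, Rnot_le_lt. intro Hc. apply Hn. exists i.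
    repeat split; [lia|apply Hsmall; lia|assumption]. }
  assert (Hpow : forall n, 2 ^ n * dist_int (IZR (N L') * th) <= dist_int (IZR (N (L' + n)) * th)).
  { induction n as [|n IH]; [simpl; rewrite Nat.add_0_r; lra|].
    replace (L' + S n)%nat with (S (L' + n)) by lia.
    eapply Rle_trans; [|apply Hg; lia]. simpl. lra. }
  assert (Hp : 0 < dist_int (IZR (N L') * th)).
  { destruct (dist_int_ge0 (IZR (N L') * th)) as [|H0]; [assumption|].
    exfalso. apply (nontrivial L'). now apply dist_int_eq0. }
  destruct (pow2_large (/ (2 * dist_int (IZR (N L') * th)))) as [n Hn'].
  pose proof (Hpow n). pose proof (dist_int_le_half (IZR (N (L' + n)) * th)).
  apply (Rmult_lt_compat_r (2 * dist_int (IZR (N L') * th))) in Hn'; [|lra].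
  rewrite Rinv_l in Hn' by lra. lra.
Qed.

Lemma usable_multiple i :
  dist_int (IZR (N i) * th) <= s / 2 ->
  IZR (N i) <= 2 * dist_int (IZR (N i) * th) * IZR (N (S i)) ->
  exists c v, Rabs (IZR c) * IZR (N i) <= 2 * s * IZR (N (S i)) /\
    s / 2 <= v <= s /\ is_int (IZR c * (IZR (N i) * th) - v).
Proof.
  intros Hsm Hbig. destruct (dist_int_attained (IZR (N i) * th)) as [k Hk].
  set (y := IZR (N i) * th - IZR k). fold y in Hk. rewrite <- Hk in Hsm, Hbig.
  assert (Hy : 0 < Rabs y).
  { rewrite Hk. destruct (dist_int_ge0 (IZR (N i) * th)) as [|H0]; [assumption|].
    exfalso. apply (nontrivial i). now apply dist_int_eq0. }
  set (q := Int_part (s / Rabs y)). destruct (Int_part_bounds (s / Rabs y)) as [F1 F2].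
  fold q in F1, F2.
  assert (Hq : s - Rabs y < IZR q * Rabs y <= s).
  { split.
    - apply (Rmult_lt_compat_r (Rabs y)) in F2; [|assumption].
      replace (s / Rabs y * Rabs y) with s in F2 by (field; lra). lra.
    - apply (Rmult_le_compat_r (Rabs y)) in F1; [|lra].
      replace (s / Rabs y * Rabs y) with s in F1 by (field; lra). lra. }
  assert (q0 : 0 <= IZR q) by (apply Rmult_le_reg_r with (Rabs y); lra).
  pose proof (chain_pos i). pose proof (chain_pos (S i)).
  set (c := if Rle_dec 0 y then q else (- q)%Z).
  assert (Hc : Rabs (IZR c) = IZR q /\ IZR c * y = IZR q * Rabs y).
  { unfold c. destruct Rle_dec.
    - rewrite !Rabs_right; lra.
    - rewrite opp_IZR, Rabs_Ropp, Rabs_right, Rabs_left; lra. }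
  exists c, (IZR q * Rabs y). split; [|split; [lra|]].
  - rewrite (proj1 Hc). nra.
  - replace (IZR c * (IZR (N i) * th) - IZR q * Rabs y) with (IZR c * IZR k)
      by (rewrite <- (proj2 Hc); unfold y; ring).
    apply is_int_mul; apply is_int_IZR.
Qed.

(* Invariant of the construction: m is bounded by 4 s N_L (so later multiples
   N_j, j >= L, barely see it), has chain norm <= 4 s, and m th = S0 modulo Z. *)
Definition partial_sum (m : Z) (L : nat) (S0 : R) : Prop :=
  Rabs (IZR m) <= 4 * s * IZR (N L) /\ chain_norm m <= 4 * s /\ is_int (IZR m * th - S0).

Lemma partial_sum_extend m L S0 : partial_sum m L S0 ->
  exists m' L' v, partial_sum m' L' (S0 + v) /\ s / 2 <= v <= s.
Proof.
  intros [Hm [Hnorm Hint]].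
  destruct (usable_index L) as [i [HLi [Hsm Hbig]]].
  destruct (usable_multiple i Hsm Hbig) as [c [v [Hc [Hv Hcv]]]].
  pose proof (chain_pos i). pose proof (chain_double i). pose proof (chain_mono L i HLi).
  assert (Hm' : Rabs (IZR (m + c * N i)) <= 4 * s * IZR (N (S i))).
  { rewrite plus_IZR, mult_IZR. eapply Rle_trans; [apply Rabs_triang|].
    rewrite Rabs_mult, (Rabs_right (IZR (N i))) by lra. nra. }
  exists (m + c * N i)%Z, (S i), v. split; [|assumption]. split; [|split].
  - assumption.
  - apply sup_dist_le. intro j. destruct (le_lt_dec j i) as [Hji|Hij].
    + rewrite plus_IZR, Rmult_plus_distr_r, dist_int_shift by now apply chain_quotient_int.
      eapply Rle_trans; [apply chain_norm_ge|exact Hnorm].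
    + eapply Rle_trans; [apply dist_int_quotient|].
      pose proof (chain_mono (S i) j Hij). pose proof (chain_pos j).
      apply (Rmult_le_reg_r (IZR (N j))); [assumption|].
      unfold Rdiv. rewrite Rmult_assoc, Rinv_l, Rmult_1_r by lra. nra.
  - replace (IZR (m + c * N i) * th - (S0 + v))
      with ((IZR m * th - S0) + (IZR c * (IZR (N i) * th) - v))
      by (rewrite plus_IZR, mult_IZR; ring).
    now apply is_int_add.
Qed.

(* Adding steps of size in [s/2, s] from 0, the partial sums reach [1/4, 1/2]. *)
Lemma partial_sum_quarter : exists m L S0, partial_sum m L S0 /\ / 4 <= S0 <= / 2.
Proof.
  assert (Hit : forall k : nat, exists m L S0, partial_sum m L S0 /\ S0 <= / 2 /\
            (/ 4 <= S0 \/ INR k * (s / 2) <= S0)).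
  { induction k as [|k IH].
    - exists 0%Z, 0%nat, 0. repeat split.
      + rewrite Rabs_R0. pose proof (chain_pos 0). nra.
      + unfold chain_norm. rewrite sup_dist_0. lra.
      + exists 0%Z. simpl. ring.
      + lra.
      + right. simpl. lra.
    - destruct IH as [m [L [S0 [HI [Hhalf [HS|HS]]]]]].
      + exists m, L, S0. auto.
      + destruct (Rle_lt_dec (/ 4) S0) as [Hq|Hq]; [exists m, L, S0; auto|].
        destruct (partial_sum_extend m L S0 HI) as [m' [L' [v [HI' Hv]]]].
        exists m', L', (S0 + v). rewrite S_INR. split; [assumption|split; [lra|]].
        destruct (Rle_lt_dec (/ 4) (S0 + v)); [left|right]; lra. }
  destruct (nat_large (/ 2 / s)) as [k Hk].
  destruct (Hit k) as [m [L [S0 [HI [Hhalf HS]]]]]. exists m, L, S0. split; [assumption|].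
  split; [|assumption]. destruct HS as [HS|HS]; [assumption|].
  apply (Rmult_lt_compat_r (s / 2)) in Hk; [|lra].
  replace (/ 2 / s * (s / 2)) with (/ 4) in Hk by (field; lra). lra.
Qed.

(* The partial sum m of norm <= 4 s < delta has |m th| >= 1/4, contradicting continuity. *)
Lemma nontrivial_absurd : False.
Proof.
  destruct partial_sum_quarter as [m [L [S0 [[_ [Hnorm Hint]] HS]]]].
  assert (Hc : dist_int (IZR m * th) < / 4) by (apply cont_th; lra).
  replace (IZR m * th) with (S0 + (IZR m * th - S0)) in Hc by ring.
  assert (Habs : Rabs S0 = S0) by (apply Rabs_right; lra).
  rewrite dist_int_shift in Hc by assumption.
  rewrite dist_int_small, Habs in Hc by (rewrite Habs; lra). lra.
Qed.

End DualKey.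

Lemma chain_character_trivial th delta : delta > 0 ->
  (forall m, chain_norm m < delta -> dist_int (IZR m * th) < / 4) ->
  exists i, is_int (IZR (N i) * th).
Proof.
  intros Hd Hc. apply NNPP. intro Hn.
  set (s := Rmin (delta / 5) (/ 8)).
  apply (nontrivial_absurd th delta s Hc).
  - intros i Hi. apply Hn. now exists i.
  - unfold s, Rmin. destruct Rle_dec; lra.
  - apply Rmin_r.
  - unfold s, Rmin. destruct Rle_dec; lra.
Qed.

Definition chain_top : topZ := sup_top (fun j => / IZR (N j)).

Ltac chain_norm_facts :=
  first [apply sup_dist_0 | apply sup_dist_opp | apply sup_dist_add | apply chain_norm_pos].

Lemma chain_top_group : is_group_topology chain_top.
Proof. apply seminorm_group_topology; chain_norm_facts. Qed.

Lemma chain_top_metrizable : metrizable chain_top.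
Proof.
  apply seminorm_metrizable; chain_norm_facts.
Qed.

Lemma chain_top_hausdorff : hausdorff chain_top.
Proof.
  apply seminorm_hausdorff; chain_norm_facts.
Qed.

Lemma chain_top_lqc : loc_quasi_convex chain_top.
Proof. apply sup_top_lqc. Qed.

End Chain.

Open Scope Z_scope.

Lemma nbhd_mono (t : topZ) (U U' : Z -> Prop) x :
  nbhd t U x -> (forall y, U y -> U' y) -> nbhd t U' x.
Proof. intros [V [HV [Vx H]]] H'. exists V. auto. Qed.

Lemma nbhd_inter (t : topZ) U U' x : is_topology t -> nbhd t U x -> nbhd t U' x ->
  nbhd t (fun y => U y /\ U' y) x.
Proof.
  intros [_ [_ Hi]] [V [HV [Vx H]]] [V' [HV' [Vx' H']]].
  exists (fun y => V y /\ V' y). split; [now apply Hi|]. split; [auto|].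
  intros y [? ?]; auto.
Qed.

Lemma subgroup_mul H n : subgroupZ H -> H n -> forall q, H (q * n).
Proof.
  intros [H0 Hs] Hn.
  assert (Hadd : forall x y, H x -> H y -> H (x + y)).
  { intros x y Hx Hy. replace (x + y) with (x - (0 - y)) by lia. auto. }
  apply Z.peano_ind; [exact H0| |]; intros q Hq.
  - replace (Z.succ q * n) with (q * n + n) by lia. auto.
  - replace (Z.pred q * n) with (q * n - n) by lia. auto.
Qed.

(* A nonzero subgroup of Z is n Z for its least positive element n. *)
Lemma subgroup_multiples H h : subgroupZ H -> H h -> h <> 0 ->
  exists n, 0 < n /\ forall x, H x <-> (n | x).
Proof.
  intros HH Hh Hh0.
  assert (Hmin : forall k : nat, 0 < Z.of_nat k -> H (Z.of_nat k) ->
            exists n, 0 < n /\ H n /\ forall m, 0 < m < n -> ~ H m).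
  { intro k. induction k as [k IH] using (well_founded_induction lt_wf). intros Hk Hk'.
    destruct (classic (exists m, 0 < m < Z.of_nat k /\ H m)) as [[m [Hm Hm']]|Hno].
    - apply (IH (Z.to_nat m)); [lia|lia|now rewrite Z2Nat.id by lia].
    - exists (Z.of_nat k). repeat split; auto. intros m Hm Hm'. apply Hno. eauto. }
  assert (Habs : H (Z.of_nat (Z.to_nat (Z.abs h)))).
  { rewrite Z2Nat.id by lia. destruct (Z.abs_eq_or_opp h) as [E|E]; rewrite E;
      [assumption|replace (- h) with (-1 * h) by lia; now apply subgroup_mul]. }
  destruct (Hmin (Z.to_nat (Z.abs h)) ltac:(lia) Habs) as [n [Hn [Hn' Hnm]]].
  exists n. split; [assumption|]. intro x. split.
  - intro Hx. pose proof (Z.mod_pos_bound x n Hn). pose proof (Z.div_mod x n ltac:(lia)).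
    destruct (Z.eq_dec (x mod n) 0) as [E|E]; [exists (x / n); lia|].
    exfalso. apply (Hnm (x mod n)); [lia|].
    replace (x mod n) with (x - (x / n) * n) by lia. apply HH; [assumption|].
    now apply subgroup_mul.
  - intros [q ->]. now apply subgroup_mul.
Qed.

Lemma divides_factorial (n : nat) q : 1 <= q <= Z.of_nat n -> (q | Z.of_nat (fact n)).
Proof.
  revert q. induction n as [|n IH]; intros q Hq; [simpl in Hq; lia|].
  replace (Z.of_nat (fact (S n))) with (Z.of_nat (S n) * Z.of_nat (fact n))
    by (rewrite <- Nat2Z.inj_mul; reflexivity).
  destruct (Z.eq_dec q (Z.of_nat (S n))) as [->|E].
  - apply Z.divide_factor_l.
  - apply Z.divide_mul_r, IH. lia.
Qed.

Section LinearTopology.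

Variable l : topZ.
Hypothesis l_group : is_group_topology l.
Hypothesis l_hausdorff : hausdorff l.
Hypothesis l_linear : linear_top l.
Hypothesis l_non_discrete : non_discrete l.

Definition open_modulus (n : Z) : Prop := 0 < n /\ nbhd l (fun x => (n | x)) 0.

Lemma nbhd_contains_modulus U : nbhd l U 0 ->
  exists n, open_modulus n /\ forall x, (n | x) -> U x.
Proof.
  intro HU. destruct (l_linear U HU) as [H [HH [HHn HHU]]].
  assert (Hh : exists h, H h /\ h <> 0).
  { apply NNPP. intro Hno. apply l_non_discrete. destruct HHn as [V [HV [V0 VH]]].
    replace (fun x : Z => x = 0) with V; [assumption|].
    apply functional_extensionality. intro x. apply propositional_extensionality. split.
    - intro Vx. apply NNPP. intro Hx. apply Hno. exists x. auto.
    - now intros ->. }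
  destruct Hh as [h [Hh Hh0]]. destruct (subgroup_multiples H h HH Hh Hh0) as [n [Hn Hx]].
  exists n. split; [split; [assumption|]|].
  - apply (nbhd_mono _ H); [assumption|]. intro; apply Hx.
  - intros x Hnx. now apply HHU, Hx.
Qed.

(* Open moduli include 1 and are closed under lcm (intersection of n Z and m Z). *)
Lemma open_modulus_1 : open_modulus 1.
Proof.
  split; [lia|]. exists (fun _ => True). split; [apply l_group|].
  split; [auto|]. intros. apply Z.divide_1_l.
Qed.

Lemma open_modulus_lcm a b : open_modulus a -> open_modulus b -> open_modulus (Z.lcm a b).
Proof.
  intros [Ha Na] [Hb Nb]. split.
  - pose proof (Z.lcm_nonneg a b). assert (Z.lcm a b <> 0) by (rewrite Z.lcm_eq_0; lia). lia.
  - eapply nbhd_mono; [apply (nbhd_inter _ _ _ _ (proj1 l_group) Na Nb)|].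
    intros y [Hy1 Hy2]. now apply Z.lcm_least.
Qed.

Lemma modulus_avoiding x : x <> 0 -> exists n, open_modulus n /\ ~ (n | x).
Proof.
  intro Hx. destruct (l_hausdorff 0 x ltac:(lia)) as [U [V [HU [HV [U0 [Vx H]]]]]].
  destruct (nbhd_contains_modulus U) as [n [Hn HnU]]; [now exists U|].
  exists n. split; [assumption|]. intro Hd. apply (H x); auto.
Qed.


(* Open moduli are unbounded in the divisibility order: given g, h and R there is an
   open common multiple g' of g and h with g' > R g (it avoids g h R!). *)
Lemma modulus_large g h R : open_modulus g -> open_modulus h -> 0 <= R ->
  exists g', open_modulus g' /\ (g | g') /\ (h | g') /\ R * g < g'.
Proof.
  intros Gg Gh HR.
  set (x := g * h * Z.of_nat (fact (Z.to_nat R))).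
  assert (Hx : x <> 0).
  { pose proof (lt_O_fact (Z.to_nat R)). destruct Gg, Gh. unfold x. nia. }
  destruct (modulus_avoiding x Hx) as [n [Gn Hn]].
  set (g' := Z.lcm (Z.lcm g h) n).
  assert (Gg' : open_modulus g') by (now apply open_modulus_lcm; [apply open_modulus_lcm|]).
  assert (Dg : (g | g')) by (eapply Z.divide_trans; apply Z.divide_lcm_l).
  exists g'. split; [assumption|split; [assumption|split]].
  - eapply Z.divide_trans; [apply Z.divide_lcm_r|apply Z.divide_lcm_l].
  - destruct (Z_lt_le_dec (R * g) g') as [E|E]; [assumption|]. exfalso.
    apply Hn. destruct Dg as [q Hq]. destruct Gg as [Hg0 _]. destruct Gg' as [Hg'0 _].
    assert (Hq1 : 1 <= q <= R) by nia.
    apply Z.divide_trans with g'; [apply Z.divide_lcm_r|].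
    rewrite Hq. unfold x. rewrite (Z.mul_comm q g), <- Z.mul_assoc.
    apply Z.mul_divide_mono_l, Z.divide_mul_r, divides_factorial. rewrite Z2Nat.id; lia.
Qed.

Lemma chain_step : exists step : nat * Z -> Z, forall i g, open_modulus g ->
  open_modulus (step (i, g)) /\ (g | step (i, g)) /\
  (open_modulus (Z.of_nat i + 1) -> (Z.of_nat i + 1 | step (i, g))) /\
  (Z.of_nat i + 2) * g < step (i, g).
Proof.
  assert (H : forall ig : nat * Z, exists g', open_modulus (snd ig) ->
    open_modulus g' /\ (snd ig | g') /\
    (open_modulus (Z.of_nat (fst ig) + 1) -> (Z.of_nat (fst ig) + 1 | g')) /\
    (Z.of_nat (fst ig) + 2) * snd ig < g').
  { intros [i g]. simpl. destruct (classic (open_modulus g)) as [Gg|Gg];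
      [|exists 0; intro; contradiction].
    destruct (classic (open_modulus (Z.of_nat i + 1))) as [Gi|Gi].
    - destruct (modulus_large g _ (Z.of_nat i + 2) Gg Gi ltac:(lia)) as [g' Hg'].
      exists g'. intros _. tauto.
    - destruct (modulus_large g 1 (Z.of_nat i + 2) Gg open_modulus_1 ltac:(lia)) as [g' Hg'].
      exists g'. intros _. tauto. }
  destruct (choice _ H) as [step Hstep]. exists step. intros i g. apply (Hstep (i, g)).
Qed.

Lemma cofinal_chain : exists N, divisor_chain N /\ (forall i, open_modulus (N i)) /\
  (forall U, nbhd l U 0 -> exists i, forall x, (N i | x) -> U x).
Proof.
  destruct chain_step as [step Hstep].
  set (N := fix N (i : nat) : Z := match i with O => 1 | S i => step (i, N i) end).
  assert (GN : forall i, open_modulus (N i)).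
  { induction i; [apply open_modulus_1|]. simpl. now apply Hstep. }
  exists N. split; [split|split; [assumption|]].
  - intro i. apply GN.
  - intro i. destruct (Hstep i (N i) (GN i)) as [_ [[r Hr] [_ Hlt]]]. exists r. split; [exact Hr|].
    destruct (GN i) as [Hp _]. simpl in Hlt. rewrite Hr in Hlt. nia.
  - intros U HU. destruct (nbhd_contains_modulus U HU) as [n [Gn HnU]].
    exists (S (Z.to_nat (n - 1))). intros x Hx. apply HnU.
    destruct Gn as [Hn0 Gn']. assert (E : n = Z.of_nat (Z.to_nat (n - 1)) + 1) by lia.
    destruct (Hstep (Z.to_nat (n - 1)) (N (Z.to_nat (n - 1))) (GN _)) as [_ [_ [Hd _]]].
    eapply Z.divide_trans; [|exact Hx]. simpl. rewrite E at 1. apply Hd. rewrite <- E. now split.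
Qed.

End LinearTopology.

Open Scope R_scope.

Section ChainVersusLinear.

Variable l : topZ.
Variable N : nat -> Z.
Hypothesis l_group : is_group_topology l.
Hypothesis HN : divisor_chain N.
Hypothesis N_open : forall i, nbhd l (fun x => (N i | x)%Z) 0%Z.
Hypothesis N_cofinal : forall U, nbhd l U 0%Z -> exists i, forall x, (N i | x)%Z -> U x.

(* An l-open set contains, around each of its points, a coset of some N_i Z, and the
   chain-norm ball of radius 1/N_i lies in that coset. *)
Lemma chain_top_finer : finer (chain_top N) l.
Proof.
  intros W HW x Wx.
  destruct (proj2 l_group x 0%Z W HW ltac:(now rewrite Z.sub_0_r))
    as [U1 [V1 [_ [HV1 [U1x [V10 HUV]]]]]].
  destruct (N_cofinal V1) as [i Hi]; [now exists V1|].
  exists (/ IZR (N i)). split; [now apply Rinv_0_lt_compat, chain_pos|].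
  intros y Hy. apply (chain_norm_divides N HN), Hi in Hy.
  replace y with (x - (x - y))%Z by lia. now apply HUV.
Qed.

(* The chain-norm ball of radius 1/4 is open but contains no N_i Z, so it is not l-open. *)
Lemma chain_top_not_coarser : exists U, chain_top N U /\ ~ l U.
Proof.
  set (B := fun y => chain_norm N (0 - y) < / 4).
  exists B. split; [apply sup_ball_open|]. intro HB.
  destruct (N_cofinal B) as [i Hi].
  { exists B. split; [assumption|]. split; [apply sup_ball_center; lra|auto]. }
  destruct (chain_multiple_far N HN i) as [a Ha].
  specialize (Hi (a * N i)%Z (Z.divide_factor_r _ _)). unfold B, chain_norm in Hi.
  rewrite Z.sub_0_l, sup_dist_opp in Hi. unfold chain_norm in Ha. lra.
Qed.

Lemma chain_character_ball f : character (chain_top N) f ->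
  exists delta, delta > 0 /\
    forall m, chain_norm N m < delta -> dist_int (IZR m * f 1%Z) < / 4.
Proof.
  intros [Hf Hc]. destruct (Hc 0%Z (/ 4) ltac:(lra)) as [U [HU [U0 HUf]]].
  destruct (HU 0%Z U0) as [delta [Hdel Hball]]. exists delta. split; [assumption|].
  intros m Hm. unfold chain_norm in Hm. rewrite <- sup_dist_opp, <- Z.sub_0_l in Hm.
  pose proof (proj2 (dist_int_ltP _ _) (HUf m (Hball m Hm))) as Hsmall.
  pose proof (hom_diff f Hf 0%Z m) as Hz. rewrite Z.sub_0_r in Hz.
  replace (IZR m * f 1%Z) with ((f m - f 0%Z) + (IZR 0 - (f m - f 0%Z - IZR m * f 1%Z)))
    by (simpl; ring).
  rewrite dist_int_shift by (apply is_int_sub; [apply is_int_IZR|assumption]). exact Hsmall.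
Qed.

Lemma character_trivial_on_open f i :
  hom_to_T f -> is_int (IZR (N i) * f 1%Z) -> cont_to_T l f.
Proof.
  intros Hf Hi x eps Heps. destruct (N_open i) as [W0 [HW0 [W00 HW0d]]].
  destruct (proj2 l_group x x W0 HW0 ltac:(now rewrite Z.sub_diag))
    as [U1 [V1 [HU1 [_ [U1x [V1x HUV]]]]]].
  exists U1. split; [assumption|split; [assumption|]].
  intros y Hy. destruct (HW0d _ (HUV y x Hy V1x)) as [q Hq].
  assert (Hint : is_int (f y - f x)).
  { pose proof (hom_diff f Hf x y) as Hz. rewrite Hq, mult_IZR in Hz.
    replace (f y - f x) with ((f y - f x - IZR q * IZR (N i) * f 1%Z)
                              + IZR q * (IZR (N i) * f 1%Z)) by ring.
    apply is_int_add; [assumption|apply is_int_mul; [apply is_int_IZR|assumption]]. }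
  destruct Hint as [k Hk]. exists k. rewrite Hk, Rminus_diag, Rabs_R0. lra.
Qed.

(* By the key lemma, chain-continuous characters are l-continuous; the converse holds
   since the chain topology is finer. *)
Lemma chain_top_same_dual : same_dual (chain_top N) l.
Proof.
  intro f. split.
  - intro Hchar. destruct (chain_character_ball f Hchar) as [delta [Hdel Hcont]].
    destruct (chain_character_trivial N HN (f 1%Z) delta Hdel Hcont) as [i Hi].
    split; [apply Hchar|]. apply (character_trivial_on_open f i); [apply Hchar|assumption].
  - intros [Hf Hc]. split; [assumption|]. intros x eps Heps.
    destruct (Hc x eps Heps) as [U [HU HU']].
    exists U. split; [now apply chain_top_finer|assumption].
Qed.

End ChainVersusLinear.

Lemma finer_compatible_topology l :
  is_group_topology l -> hausdorff l -> linear_top l -> non_discrete l ->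
  exists t : topZ,
    is_group_topology t /\ metrizable t /\ loc_quasi_convex t /\
    hausdorff t /\ strictly_finer t l /\ same_dual t l.
Proof.
  intros Hg Hh Hl Hnd.
  destruct (cofinal_chain l Hg Hh Hl Hnd) as [N [HN [Nopen Ncof]]].
  assert (Nopen' : forall i, nbhd l (fun x => (N i | x)%Z) 0%Z)
    by (intro i; exact (proj2 (Nopen i))).
  exists (chain_top N). split; [|split; [|split; [|split; [|split; [split|]]]]].
  - apply chain_top_group.
  - now apply chain_top_metrizable.
  - apply chain_top_lqc.
  - now apply chain_top_hausdorff.
  - exact (chain_top_finer l N Hg HN Ncof).
  - exact (chain_top_not_coarser l N HN Ncof).
  - exact (chain_top_same_dual l N Hg HN Nopen' Ncof).
Qed.

Open Scope Z_scope.

Section PAdic.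

Variable p : Z.

Lemma padic_coset_open x n : padic_top p (fun u => exists k, u = x + k * p ^ Z.of_nat n).
Proof. intros u [k ->]. exists n. intro k'. exists (k + k'). ring. Qed.

Lemma padic_group_topology : is_group_topology (padic_top p).
Proof.
  split; [split; [|split]|].
  - intros x _. now exists 0%nat.
  - intros I F HF x [i Hi]. destruct (HF i x Hi) as [n Hn]. exists n. intro k. now exists i.
  - intros U V HU HV x [Ux Vx]. destruct (HU x Ux) as [n1 H1]. destruct (HV x Vx) as [n2 H2].
    exists (n1 + n2)%nat. intro k. rewrite Nat2Z.inj_add, Z.pow_add_r by lia. split.
    + replace (k * (p ^ Z.of_nat n1 * p ^ Z.of_nat n2))
        with ((k * p ^ Z.of_nat n2) * p ^ Z.of_nat n1) by ring. apply H1.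
    + replace (k * (p ^ Z.of_nat n1 * p ^ Z.of_nat n2))
        with ((k * p ^ Z.of_nat n1) * p ^ Z.of_nat n2) by ring. apply H2.
  - intros x y W HW Wxy. destruct (HW _ Wxy) as [n Hn].
    exists (fun u => exists k, u = x + k * p ^ Z.of_nat n),
           (fun u => exists k, u = y + k * p ^ Z.of_nat n).
    do 2 (split; [apply padic_coset_open|]). split; [exists 0; ring|]. split; [exists 0; ring|].
    intros u v [k ->] [k' ->].
    replace (x + k * p ^ Z.of_nat n - (y + k' * p ^ Z.of_nat n))
      with (x - y + (k - k') * p ^ Z.of_nat n) by ring. apply Hn.
Qed.

Lemma padic_linear : linear_top (padic_top p).
Proof.
  intros U [V [HV [V0 VU]]]. destruct (HV 0 V0) as [n Hn].
  exists (fun z => (p ^ Z.of_nat n | z)). split; [split|split].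
  - apply Z.divide_0_r.
  - intros a b Ha Hb. now apply Z.divide_sub_r.
  - exists (fun z => (p ^ Z.of_nat n | z)). split; [|split; [apply Z.divide_0_r|auto]].
    intros z [q ->]. exists n. intro k. exists (q + k). ring.
  - intros z [q ->]. apply VU. specialize (Hn q). now rewrite Z.add_0_l in Hn.
Qed.

Hypothesis p_gt1 : 1 < p.

(* For p > 1 it is Hausdorff (x - y is not divisible by p^n for p^n > |x - y|) and
   non-discrete ({0} contains no coset of p^n Z). *)
Lemma padic_hausdorff : hausdorff (padic_top p).
Proof.
  intros x y Hxy. set (n := Z.to_nat (Z.abs (x - y))).
  assert (Hb : Z.abs (x - y) < p ^ Z.of_nat n).
  { unfold n. rewrite Z2Nat.id by lia. apply Z.pow_gt_lin_r; lia. }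
  exists (fun u => exists k, u = x + k * p ^ Z.of_nat n),
         (fun u => exists k, u = y + k * p ^ Z.of_nat n).
  do 2 (split; [apply padic_coset_open|]). split; [exists 0; ring|]. split; [exists 0; ring|].
  intros z [k Hk] [k' Hk']. assert (E : x - y = (k' - k) * p ^ Z.of_nat n) by lia.
  assert (0 < p ^ Z.of_nat n) by (apply Z.pow_pos_nonneg; lia).
  assert (k' - k <> 0) by (intro; nia). nia.
Qed.

Lemma padic_non_discrete : non_discrete (padic_top p).
Proof.
  intro H. destruct (H 0 eq_refl) as [n Hn]. specialize (Hn 1).
  assert (0 < p ^ Z.of_nat n) by (apply Z.pow_pos_nonneg; lia). lia.
Qed.

End PAdic.

Lemma not_mackey_of_finer_compatible l :
  (exists t : topZ,
     is_group_topology t /\ metrizable t /\ loc_quasi_convex t /\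
     hausdorff t /\ strictly_finer t l /\ same_dual t l) -> ~ mackey l.
Proof.
  intros [t [Hg [_ [Hq [_ [[Hf [U [HtU HlU]]] Hd]]]]]] [Hl Hm].
  apply HlU, (Hm t); [|exact HtU]. split; [split; assumption|split; assumption].
Qed.

Theorem theorem4p6 :
  (forall l : topZ,
     is_group_topology l -> hausdorff l -> linear_top l -> non_discrete l ->
     (exists t : topZ,
        is_group_topology t /\ metrizable t /\ loc_quasi_convex t /\
        hausdorff t /\ strictly_finer t l /\ same_dual t l) /\
     ~ mackey l) /\
  (forall p : Z, prime p -> ~ mackey (padic_top p)).
Proof.
  split.
  - intros l Hg Hh Hl Hnd.
    pose proof (finer_compatible_topology l Hg Hh Hl Hnd) as Ht.
    split; [exact Ht|]. now apply not_mackey_of_finer_compatible.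
  - intros p Hp. pose proof (prime_ge_2 p Hp) as Hp2.
    apply not_mackey_of_finer_compatible, finer_compatible_topology.
    + apply padic_group_topology.
    + apply padic_hausdorff; lia.
    + apply padic_linear.
    + apply padic_non_discrete; lia.
Qed.
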